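(* Let $\mathcal{P}\subseteq\mathbb{Z}_{\geq0}$, working with formal power series over a commutative ring $R\supseteq\mathbb{Q}$. Then $$F^{\mathrm{CYC},\mathcal{P}}(u,z)=\Big(1-u z\, e_{\mathcal{P}-1}\big(T^{\mathcal{P}}(z)\big)\Big)^{-1}.$$
   Context: $[n]=\{1,\dots,n\}$. $e_\mathcal{P}(z)=\sum_{n\in\mathcal{P}}z^n/n!$, $\mathcal{P}-1=\{n-1:n\in\mathcal{P},n\ge1\}$. $T^\mathcal{P}(z)=\sum_t z^{|t|}/|t|!$ over labeled rooted trees $t$ (trees on vertex set $[|t|]$ with a distinguished root) in which every vertex has a number of children (neighbours farther from the root) in $\mathcal{P}$. $F^{\mathrm{CYC},\mathcal{P}}(u,z)=\sum_{n\ge0}\frac{z^n}{n!}\sum_f u^{\mathrm{cyc}(f)}$, summing over functions $f:[n]\to[n]$ with $|f^{-1}(x)|\in\mathcal{P}$ for all $x$, where $\mathrm{cyc}(f)$ is the number of $x\in[n]$ with $f^j(x)=x$ for some $j\ge1$. *)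

From mathcomp Require Import all_boot all_order all_algebra.
Set Implicit Arguments. Unset Strict Implicit. Unset Printing Implicit Defensive.
Import GRing.Theory.
Local Open Scope ring_scope.

(** Formal power series in one variable z over a ring S, represented by their
    coefficient sequence n |-> [z^n]. *)
Definition fps_mul (S : nzRingType) (a b : nat -> S) : nat -> S :=
  fun n => \sum_(i < n.+1) a i * b (n - i)%N.
Definition fps_one (S : nzRingType) : nat -> S :=
  fun n => if n == 0%N then 1 else 0.
Definition fps_pow (S : nzRingType) (a : nat -> S) (k : nat) : nat -> S :=
  iter k (fps_mul a) (@fps_one S).
(** Composition g(h(z)); this is the genuine composition whenever h 0 = 0
    (only then do the terms m > n not contribute to [z^n]). *)
Definition fps_comp (S : nzRingType) (g h : nat -> S) : nat -> S :=
  fun n => \sum_(m < n.+1) g m * fps_pow h m n.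

Definition expP (R : unitRingType) (P : pred nat) : nat -> R :=
  fun n => if P n then ((n`!)%:R)^-1 else 0.
Definition predm1 (P : pred nat) : pred nat := fun m => P m.+1.

(** A labeled rooted tree on vertex set 'I_n (= [n] shifted), encoded by its
    parent map: par x = None iff x is the root, par x = Some y iff y is the
    neighbour of x closer to the root. *)
Definition is_rooted_tree (n : nat) (par : {ffun 'I_n -> option 'I_n}) : bool :=
  (#|[set x | par x == None]| == 1%N) &&
  [forall x, iter n (obind (fun y => par y)) (Some x) == None].
Definition nchildren (n : nat) (par : {ffun 'I_n -> option 'I_n}) (x : 'I_n) : nat :=
  #|[set y | par y == Some x]|.
Definition tree_count (P : pred nat) (n : nat) : nat :=
  #|[set par : {ffun 'I_n -> option 'I_n} |
      is_rooted_tree par && [forall x, P (nchildren par x)]]|.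
Definition TP (R : unitRingType) (P : pred nat) : nat -> R :=
  fun n => (tree_count P n)%:R * ((n`!)%:R)^-1.

(** cyc(f) = #{ x | f^j(x) = x for some j >= 1 } (for f on an n-set, j <= n suffices) *)
Definition cyc (n : nat) (f : {ffun 'I_n -> 'I_n}) : nat :=
  #|[set x | [exists j : 'I_n, iter j.+1 f x == x]]|.
Definition fibresP (P : pred nat) (n : nat) (f : {ffun 'I_n -> 'I_n}) : bool :=
  [forall x, P #|[set y | f y == x]|].

(** F^{CYC,P}(u,z), as a power series in z whose coefficients are polynomials
    in u:  [z^n] = (1/n!) sum_{f} u^{cyc f}. *)
Definition FCYC (R : comUnitRingType) (P : pred nat) : nat -> {poly R} :=
  fun n => ((n`!)%:R)^-1 *:
    \sum_(f : {ffun 'I_n -> 'I_n} | fibresP P f) 'X^(cyc f).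

Definition denomCYC (R : comUnitRingType) (P : pred nat) : nat -> {poly R} :=
  let A := fps_comp (expP R (predm1 P)) (TP R P) in
  fun n => match n with
           | 0 => 1
           | k.+1 => - ('X * (A k)%:P)
           end.

From mathcomp Require Import all_boot all_order all_algebra all_fingroup zify ring.
From Stdlib Require Import FunctionalExtensionality.
Set Implicit Arguments. Unset Strict Implicit. Unset Printing Implicit Defensive.
Import GRing.Theory.

(* A function f on [n] is the same as the forest obtained by forgetting the
   values of f at its cyclic points, which become the roots, together with the
   permutation that f induces on these roots; the fibre of f at x consists of
   the children of x, plus one more point when x is cyclic.  So the functions
   with fibre sizes in P and k cyclic points number k! times the forests of
   k trees in which roots have a number of children in P - 1 and the other
   vertices a number in P.  Marking a root splits such a forest into the
   marked tree and a forest of k - 1 trees, so the EGF of these forests is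
   X^k / k!, with X the EGF of the trees; deleting the root of a tree leaves a
   forest of P-trees with a number of components in P - 1, so that
   X = z e_{P-1}(T^P(z)).  Summing u^k X^k gives F^{CYC,P} = 1 / (1 - u X). *)

Lemma iter_lt_card (T : finType) (f : T -> T) x y k :
  iter k f x = y -> exists2 k', k' < #|T| & iter k' f x = y.
Proof.
move=> fk; have xy : fconnect f x y by rewrite -fk fconnect_iter.
exists (findex f x y); last exact: iter_findex.
exact: leq_trans (findex_max xy) (max_card _).
Qed.

Lemma sum_card_mem (I T : finType) (C : pred I) (g : I -> {set T}) :
  \sum_x #|[set i | C i && (x \in g i)]| = \sum_(i | C i) #|g i|.
Proof.
under eq_bigr => x _ do rewrite -sum1dep_card big_mkcondr /=.
rewrite exchange_big; apply: eq_bigr => i _.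
by rewrite -sum1_card [RHS]big_mkcond.
Qed.

Lemma card_partition_pred (I J : finType) (A : pred I) (f : I -> J) (K : pred J) :
  (forall i, A i -> K (f i)) ->
  #|[set i | A i]| = \sum_(j | K j) #|[set i | A i && (f i == j)]|.
Proof.
move=> fK; rewrite -sum1dep_card (partition_big f K fK).
by apply: eq_bigr => j _; apply: sum1dep_card.
Qed.

(** * Forests as parent maps *)

Section Forests.
Variable U : finType.
Implicit Types (p q : {ffun U -> option U}) (S : {set U}) (Q P K : pred nat).

(* As in [is_rooted_tree]; [p x = None] both at the roots and outside the
   vertex set [S]. *)
Definition up p : option U -> option U := obind p.
Definition parent_on S p :=
  [forall x, (x \notin S) ==> (p x == None)] &&
  [forall x, forall y, (p x == Some y) ==> (y \in S)].
Definition acyclic p := [forall x, iter #|U| (up p) (Some x) == None].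
Definition rootset S p := [set x in S | p x == None].
Definition nchild p x := #|[set y | p y == Some x]|.

Definition forest Q P K S p :=
  [&& parent_on S p, acyclic p, K #|rootset S p| &
   [forall x in S, if p x == None then Q (nchild p x) else P (nchild p x)]].
Definition nforests Q P K S := #|[set p | forest Q P K S p]|.

Lemma iter_up_None p k : iter k (up p) None = None.
Proof. by elim: k => //= k ->. Qed.

Lemma parent_onP S p :
  reflect ((forall x, x \notin S -> p x = None) /\
           (forall x y, p x = Some y -> y \in S)) (parent_on S p).
Proof.
apply: (iffP andP) => [[/forallP out /forallP val]|[out val]]; split.
- by move=> x /(implyP (out x)) /eqP.
- by move=> x y pxy; apply: (implyP (forallP (val x) y)); rewrite pxy.
- by apply/forallP => x; apply/implyP => /out ->.
- by apply/forallP => x; apply/forallP => y; apply/implyP => /eqP /val.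
Qed.

Lemma acyclicP p :
  reflect (forall x, exists k, iter k (up p) (Some x) = None) (acyclic p).
Proof.
apply: (iffP forallP) => [fin x|fin x]; first by exists #|U|; apply/eqP.
have [k] := fin x; case/iter_lt_card => k'; rewrite card_option ltnS => k'U fk'.
by rewrite -(subnK k'U) iterD fk' iter_up_None.
Qed.

Lemma forestP Q P K S p : reflect
  [/\ parent_on S p, acyclic p, K #|rootset S p| &
   forall x, x \in S -> if p x == None then Q (nchild p x) else P (nchild p x)]
  (forest Q P K S p).
Proof.
by apply: (iffP and4P) => [[? ? ? /forall_inP]|[? ? ? /forall_inP]]; split.
Qed.

Lemma acyclic_sub p q : (forall x, q x = p x \/ q x = None) -> acyclic p -> acyclic q.
Proof.
move=> qp /acyclicP fin; apply/acyclicP => x; have [k fk] := fin x; exists k.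
have : iter k (up q) (Some x) = iter k (up p) (Some x) \/
       iter k (up q) (Some x) = None.
  elim: k {fk} => [|k [IHk|IHk]]; [by left | | by right; rewrite iterS IHk].
  rewrite !iterS IHk; case: (iter k (up p) (Some x)) => [z|] /=; [exact: qp | by left].
by rewrite fk; case.
Qed.

Lemma forestT Q P K S p : forest Q P K S p = forest Q P predT S p && K #|rootset S p|.
Proof. by rewrite /forest; case: (K _); rewrite /= ?andbT ?andbF. Qed.

Lemma forest_parent_on Q P K S p : forest Q P K S p -> parent_on S p.
Proof. by case/and4P. Qed.

Lemma rootset_None S p x : x \in rootset S p -> p x = None.
Proof. by rewrite inE => /andP [_ /eqP]. Qed.

Lemma rootset_sub S p : rootset S p \subset S.
Proof. by apply/subsetP => x; rewrite inE => /andP []. Qed.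

Lemma nchild_eq p q x :
  (forall y, (q y == Some x) = (p y == Some x)) -> nchild q x = nchild p x.
Proof. by move=> E; apply: eq_card => y; rewrite !inE E. Qed.

End Forests.

Section Relabel.
Variables (U V : finType) (h : U -> V).
Hypothesis h_inj : injective h.
Implicit Types (p : {ffun U -> option U}) (S : {set U}).

Definition relabel p : {ffun V -> option V} :=
  [ffun y => if [pick x | h x == y] is Some x then omap h (p x) else None].
Definition unrelabel (p : {ffun V -> option V}) : {ffun U -> option U} :=
  [ffun x => obind (fun y => [pick z | h z == y]) (p (h x))].

Lemma pick_preim x : [pick z | h z == h x] = Some x.
Proof. by case: pickP => [z /eqP/h_inj -> //|/(_ x)]; rewrite eqxx. Qed.

Lemma relabel_h p x : relabel p (h x) = omap h (p x).
Proof. by rewrite ffunE pick_preim. Qed.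

Lemma relabel_out p y : (forall x, h x != y) -> relabel p y = None.
Proof. by move=> hy; rewrite ffunE; case: pickP => // x; rewrite (negbTE (hy x)). Qed.

Lemma relabelK : cancel relabel unrelabel.
Proof.
move=> p; apply/ffunP => x; rewrite ffunE relabel_h.
by case: (p x) => //= y; rewrite pick_preim.
Qed.

Lemma unrelabelK S (p : {ffun V -> option V}) :
  parent_on (h @: S) p -> relabel (unrelabel p) = p.
Proof.
case/parent_onP => out val; apply/ffunP => y; rewrite ffunE.
case: pickP => [x /eqP <-|hy].
  rewrite ffunE; case pxy: (p (h x)) => [z|//] /=.
  by case/imsetP: (val _ _ pxy) => w _ ->; rewrite pick_preim.
symmetry; apply: out; apply/imsetP => -[w _ yw].
by move: (hy w); rewrite yw eqxx.
Qed.

Lemma iter_up_relabel p k x :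
  iter k (up (relabel p)) (Some (h x)) = omap h (iter k (up p) (Some x)).
Proof.
by elim: k => //= k ->; case: (iter k (up p) (Some x)) => //= z; apply: relabel_h.
Qed.

Lemma parent_on_relabel S p : parent_on (h @: S) (relabel p) = parent_on S p.
Proof.
apply/parent_onP/parent_onP => [[out val]|[out val]]; split.
- move=> x xS; have := out (h x); rewrite relabel_h mem_imset // => /(_ xS).
  by case: (p x).
- by move=> x y pxy; have := val (h x) (h y); rewrite relabel_h pxy mem_imset //; apply.
- move=> y yS; case: (pickP (fun x => h x == y)) => [x /eqP hxy|hy].
    rewrite -hxy relabel_h out //; apply: contra yS => xS; by rewrite -hxy imset_f.
  by apply: relabel_out => x; rewrite hy.
- move=> y z; case: (pickP (fun x => h x == y)) => [x /eqP <-|hy].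
    rewrite relabel_h; case pxw: (p x) => [w|//] [<-].
    by rewrite imset_f // (val _ _ pxw).
  by rewrite relabel_out // => x; rewrite hy.
Qed.

Lemma acyclic_relabel p : acyclic (relabel p) = acyclic p.
Proof.
apply/acyclicP/acyclicP => fin x.
  have [k] := fin (h x); rewrite iter_up_relabel => fk; exists k.
  by case: (iter k (up p) (Some x)) fk.
case: (pickP (fun z => h z == x)) => [z /eqP <-|hx].
  by have [k fk] := fin z; exists k; rewrite iter_up_relabel fk.
by exists 1; rewrite /= relabel_out // => z; rewrite hx.
Qed.

Lemma rootset_relabel S p : rootset (h @: S) (relabel p) = h @: rootset S p.
Proof.
apply/setP => y; rewrite inE; apply/andP/imsetP => [[/imsetP [x xS ->]]|[x]].
  by rewrite relabel_h => px; exists x => //; rewrite inE xS; case: (p x) px.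
by rewrite inE => /andP [xS /eqP px] ->; rewrite imset_f // relabel_h px.
Qed.

Lemma nchild_relabel p x : nchild (relabel p) (h x) = nchild p x.
Proof.
rewrite /nchild -(card_imset _ h_inj); apply: eq_card => y; rewrite inE.
apply/idP/imsetP => [|[z]]; last by rewrite inE => /eqP pz ->; rewrite relabel_h pz.
case: (pickP (fun z => h z == y)) => [z /eqP <-|hy]; last first.
  by rewrite relabel_out // => z; rewrite hy.
rewrite relabel_h => pz; exists z => //; rewrite inE.
by case: (p z) pz => //= w /eqP [/h_inj ->].
Qed.

Lemma forest_relabel Q P K S p :
  forest Q P K (h @: S) (relabel p) = forest Q P K S p.
Proof.
rewrite /forest parent_on_relabel acyclic_relabel rootset_relabel card_imset //.
congr [&& _, _, _ & _]; apply/forall_inP/forall_inP => deg x.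
  move=> xS; have := deg (h x) (imset_f _ xS).
  by rewrite relabel_h nchild_relabel; case: (p x).
by case/imsetP => z zS ->; rewrite relabel_h nchild_relabel; have := deg z zS; case: (p z).
Qed.

Lemma nforests_relabel Q P K S : nforests Q P K (h @: S) = nforests Q P K S.
Proof.
rewrite /nforests -(card_imset _ (can_inj relabelK)); apply: eq_card => p.
rewrite inE; apply/idP/imsetP => [Fp|[q]]; last first.
  by rewrite inE => Fq ->; rewrite forest_relabel.
have onS : parent_on (h @: S) p by case/and4P: Fp.
by exists (unrelabel p); rewrite ?(unrelabelK onS) // inE -forest_relabel (unrelabelK onS).
Qed.

End Relabel.

Definition forest_count Q P K n := nforests Q P K [set: 'I_n].

Lemma nforests_card (U : finType) Q P K (S : {set U}) :
  nforests Q P K S = forest_count Q P K #|S|.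
Proof.
have imS : (@enum_val U (mem S)) @: [set: 'I_#|S|] = S.
  apply/setP => y; apply/imsetP/idP => [[i _ ->]|yS]; first exact: enum_valP.
  by exists (enum_rank_in yS y); rewrite ?inE // enum_rankK_in.
by rewrite -{1}imS nforests_relabel //; apply: enum_val_inj.
Qed.

Lemma rootset_ltn n (p : {ffun 'I_n -> option 'I_n}) : #|rootset [set: 'I_n] p| < n.+1.
Proof.
by rewrite ltnS (leq_trans (subset_leq_card (rootset_sub _ _))) // cardsT card_ord.
Qed.

(** * Splitting a forest at a root *)

Section Components.
Variable U : finType.
Implicit Types (p q : {ffun U -> option U}) (S A B : {set U}).

Definition reach p x r := fconnect (up p) (Some x) (Some r).

Lemma reach_refl p x : reach p x x.
Proof. exact: connect0. Qed.

Lemma reach_parent p x y r :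
  p x = Some y -> reach p x r = (x == r) || reach p y r.
Proof. by move=> pxy; rewrite /reach fconnect_eqVf /= pxy. Qed.

Lemma reach_root_eq p x r : p x = None -> reach p x r = (x == r).
Proof.
move=> px; rewrite /reach fconnect_eqVf /= px.
have -> : fconnect (up p) None (Some r) = false.
  by apply/negP => /iter_findex; rewrite iter_up_None.
by rewrite orbF.
Qed.

Lemma reachP p x r :
  reflect (exists k, iter k (up p) (Some x) = Some r) (reach p x r).
Proof.
apply: (iffP idP) => [/iter_findex <-|[k fk]]; first by eexists.
by rewrite /reach -fk fconnect_iter.
Qed.

Lemma reach_rootset S p x : parent_on S p -> acyclic p -> x \in S ->
  exists2 r, r \in rootset S p & reach p x r.
Proof.
case/parent_onP=> _ val /acyclicP /(_ x) [k]; elim: k x => [|k IHk] x //.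
rewrite iterSr /=; case pxy: (p x) => [y|] fin xS.
  have [r rR yr] := IHk y fin (val _ _ pxy).
  by exists r; rewrite // (reach_parent _ pxy) yr orbT.
by exists x; rewrite ?reach_refl // inE xS pxy.
Qed.

Lemma iter_up_agree A p q x k :
  {in A, q =1 p} -> (forall z y, z \in A -> p z = Some y -> y \in A) -> x \in A ->
  iter k (up q) (Some x) = iter k (up p) (Some x) /\
  oapp (mem A) true (iter k (up p) (Some x)).
Proof.
move=> qp Aclosed xA; elim: k => [|k [IHq IHA]] //; rewrite !iterS IHq.
case: (iter k (up p) (Some x)) IHA => //= z zA; rewrite qp //.
by case pzy: (p z) => [y|] //=; split=> //; apply: Aclosed zA pzy.
Qed.

Definition restr A p : {ffun U -> option U} :=
  [ffun x => if x \in A then p x else None].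
Definition glue A p q : {ffun U -> option U} :=
  [ffun x => if x \in A then p x else q x].

Section Restrict.
Variables (S A : {set U}) (p : {ffun U -> option U}).
Hypotheses (pS : parent_on S p) (AS : A \subset S)
  (fwd : forall x y, x \in A -> p x = Some y -> y \in A)
  (bwd : forall x y, y \in A -> p x = Some y -> x \in A).

Lemma restr_parent_on : parent_on A (restr A p).
Proof.
apply/parent_onP; split=> [x|x y]; rewrite ffunE; first by move/negbTE ->.
by case: ifP => // xA /(fwd xA).
Qed.

Lemma restr_acyclic : acyclic p -> acyclic (restr A p).
Proof.
move/acyclicP=> fin; apply/acyclicP => x.
case xA: (x \in A); last by exists 1; rewrite /= ffunE xA.
have [k fk] := fin x; exists k.
case: (@iter_up_agree A p (restr A p) x k) => // [z zA|-> //].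
by rewrite ffunE zA.
Qed.

Lemma rootset_restr : rootset A (restr A p) = rootset S p :&: A.
Proof.
apply/setP => x; rewrite !inE ffunE andbC.
by case xA: (x \in A); rewrite ?andbF //= (subsetP AS).
Qed.

Lemma nchild_restr x : x \in A -> nchild (restr A p) x = nchild p x.
Proof.
move=> xA; apply: nchild_eq => y; rewrite ffunE; case: ifP => // yA.
by apply/esym/eqP => /(bwd xA); rewrite yA.
Qed.

Lemma forest_restr Q P K : forest Q P K S p ->
  forest Q P (pred1 #|rootset S p :&: A|) A (restr A p).
Proof.
case/forestP=> _ ac _ deg; apply/forestP; split=> //.
- exact: restr_parent_on.
- exact: restr_acyclic.
- by rewrite /= rootset_restr.
by move=> x xA; rewrite nchild_restr // ffunE xA; apply: deg (subsetP AS x xA).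
Qed.

Lemma setD_closed :
  (forall x y, x \in S :\: A -> p x = Some y -> y \in S :\: A) /\
  (forall x y, y \in S :\: A -> p x = Some y -> x \in S :\: A).
Proof.
case/parent_onP: pS => out val; split=> x y.
  rewrite !inE => /andP [xA _] pxy; rewrite (val _ _ pxy) andbT.
  by apply: contra xA => yA; apply: bwd pxy.
rewrite !inE => /andP [yA _] pxy; apply/andP; split.
  by apply: contra yA => xA; apply: fwd pxy.
by apply: contraT => /out; rewrite pxy.
Qed.

Lemma glue_restr : glue A (restr A p) (restr (S :\: A) p) = p.
Proof.
apply/ffunP => x; rewrite !ffunE in_setD; case: (x \in A) => //=.
by case: ifP => // /negbT; case/parent_onP: pS => out _ /out.
Qed.

End Restrict.

Definition component S p r := [set x in S | reach p x r].

Section Glue.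
Variables (A B : {set U}) (p q : {ffun U -> option U}).
Hypotheses (AB : [disjoint A & B]) (pA : parent_on A p) (qB : parent_on B q).
Let m := glue A p q.

Lemma glue_parent_on : parent_on (A :|: B) m.
Proof.
case/parent_onP: pA => outp valp; case/parent_onP: qB => outq valq.
apply/parent_onP; split=> [x|x y]; rewrite ffunE.
  by rewrite inE negb_or => /andP [/negbTE -> xB]; apply: outq.
by case: ifP => _ /[dup] [/valp|/valq]; rewrite inE => -> //; rewrite orbT.
Qed.

Lemma glueE x : m x = if x \in A then p x else q x.
Proof. by rewrite ffunE. Qed.

Let q_notin_A x y : q x = Some y -> y \in A = false.
Proof. by case/parent_onP: qB => _ val /val; apply: disjointFl. Qed.

Lemma iter_up_gluel x k : x \in A ->
  iter k (up m) (Some x) = iter k (up p) (Some x).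
Proof.
move=> xA; case: (@iter_up_agree A p m x k) => // [z zA|z y _].
  by rewrite glueE zA.
by case/parent_onP: pA => _ /[apply].
Qed.

Lemma iter_up_gluer x k : x \notin A ->
  iter k (up m) (Some x) = iter k (up q) (Some x) /\
  oapp (mem (~: A)) true (iter k (up q) (Some x)).
Proof.
move=> xA; apply: iter_up_agree; rewrite ?inE //.
  by move=> z; rewrite inE glueE => /negbTE ->.
by move=> z y _ /q_notin_A; rewrite inE => ->.
Qed.

Lemma glue_acyclic : acyclic p -> acyclic q -> acyclic m.
Proof.
move=> /acyclicP finp /acyclicP finq; apply/acyclicP => x.
case xA: (x \in A).
  by have [k fk] := finp x; exists k; rewrite iter_up_gluel.
have [k fk] := finq x; exists k.
by case: (iter_up_gluer k (negbT xA)) => ->.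
Qed.

Lemma component_glue r : acyclic p -> rootset A p = [set r] ->
  component (A :|: B) m r = A.
Proof.
move=> acp pr; have rA : r \in A by apply: (subsetP (rootset_sub A p)); rewrite pr set11.
apply/setP => x; rewrite inE in_setU; case xA: (x \in A) => /=.
  have [y] := reach_rootset pA acp xA; rewrite pr inE => /eqP -> /reachP [k fk].
  by apply/reachP; exists k; rewrite iter_up_gluel.
apply/negP => /andP [_ /reachP [k]]; case: (iter_up_gluer k (negbT xA)) => -> inA fk.
by move: inA; rewrite fk /= inE rA.
Qed.

Lemma rootset_glue : rootset (A :|: B) m = rootset A p :|: rootset B q.
Proof.
apply/setP => x; rewrite !inE glueE.
by case xA: (x \in A); rewrite //= (disjointFr AB xA) orbF.
Qed.

Lemma nchild_gluel x : x \in A -> nchild m x = nchild p x.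
Proof.
move=> xA; apply: nchild_eq => y; rewrite glueE; case: ifP => // /negbT yA.
case/parent_onP: pA => /(_ y yA) -> _ /=.
by apply/eqP => /q_notin_A; rewrite xA.
Qed.

Lemma nchild_gluer x : x \in B -> nchild m x = nchild q x.
Proof.
move=> xB; apply: nchild_eq => y; rewrite glueE; case: ifP => // yA.
case/parent_onP: qB => /(_ y); rewrite (disjointFr AB yA) => /(_ isT) -> _ /=.
case/parent_onP: pA => _ val.
by apply/negbTE/eqP => /val; rewrite (disjointFl AB xB).
Qed.

Lemma restr_gluel : restr A m = p.
Proof.
apply/ffunP => x; rewrite !ffunE; case: ifP => [-> //|/negbT xA].
by case/parent_onP: pA => /(_ x xA) ->.
Qed.

Lemma restr_gluer : restr B m = q.
Proof.
apply/ffunP => x; rewrite !ffunE; case: ifP => [xB|/negbT xB].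
  by rewrite (disjointFl AB xB).
by case/parent_onP: qB => /(_ x xB) ->.
Qed.

Lemma forest_glue Q P k l : forest Q P (pred1 k) A p -> forest Q P (pred1 l) B q ->
  forest Q P (pred1 (k + l)) (A :|: B) m.
Proof.
case/forestP=> _ acp /eqP <- degp; case/forestP=> _ acq /eqP <- degq.
apply/forestP; split.
- exact: glue_parent_on.
- exact: glue_acyclic.
- have rArB := disjointW (rootset_sub A p) (rootset_sub B q) AB.
  by rewrite /= rootset_glue cardsU (disjoint_setI0 rArB) cards0 subn0.
move=> x; rewrite inE glueE; case xA: (x \in A) => /= xB.
  by rewrite nchild_gluel //; apply: degp.
by rewrite nchild_gluer //; apply: degq.
Qed.

End Glue.

Section Component.
Variables (S : {set U}) (p : {ffun U -> option U}) (r : U).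
Hypotheses (pS : parent_on S p) (rR : r \in rootset S p).
Let C := component S p r.

Lemma component_sub : C \subset S.
Proof. by apply/subsetP => x; rewrite inE => /andP []. Qed.

Lemma component_fwd x y : x \in C -> p x = Some y -> y \in C.
Proof.
case/parent_onP: pS => _ val; rewrite !inE => /andP [_ xr] pxy.
rewrite (val _ _ pxy) /=; move: xr; rewrite (reach_parent _ pxy).
by case: eqP => //= xr; move: pxy; rewrite xr (rootset_None rR).
Qed.

Lemma component_bwd x y : y \in C -> p x = Some y -> x \in C.
Proof.
case/parent_onP: pS => out _; rewrite !inE => /andP [_ yr] pxy.
rewrite (reach_parent _ pxy) yr orbT andbT.
by apply: contraT => /out; rewrite pxy.
Qed.

Lemma rootset_component : rootset S p :&: C = [set r].
Proof.
apply/setP => x; rewrite in_set1 in_setI; apply/idP/eqP => [|->].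
  by rewrite !inE => /andP [/andP [_ /eqP px] /andP [_]]; rewrite reach_root_eq // => /eqP.
by rewrite rR inE reach_refl (subsetP (rootset_sub S p)).
Qed.

Lemma rootset_setD_component : rootset S p :&: (S :\: C) = rootset S p :\ r.
Proof.
apply/setP => x; have /setP/(_ x) := rootset_component; rewrite !inE.
by case: (x \in S); case: (p x == None); rewrite ?andbF //= => ->.
Qed.

End Component.

Section Split.
Variables (Q P : pred nat) (S S1 : {set U}) (r : U).
Hypothesis S1S : S1 \subset S.

Lemma disjoint_setD : [disjoint S1 & (S :\: S1)].
Proof. by rewrite disjoints_subset setDE setCI setCK subsetUr. Qed.

Lemma setU_setD : S1 :|: (S :\: S1) = S.
Proof. by rewrite -{1}(setIidPr S1S) setID. Qed.

Lemma forest_split_restr k p :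
  forest Q P (pred1 k.+1) S p -> r \in rootset S p -> component S p r = S1 ->
  forest Q P (pred1 1) S1 (restr S1 p) && (r \in rootset S1 (restr S1 p)) /\
  forest Q P (pred1 k) (S :\: S1) (restr (S :\: S1) p).
Proof.
move=> Fp rR <-; have /forestP [pS _ /eqP nR _] := Fp.
have [fwd2 bwd2] := setD_closed pS (component_fwd pS rR) (component_bwd pS (r := r)).
split; last first.
  have nR' : #|rootset S p :\ r| = k by move: nR; rewrite (cardsD1 r) rR => -[].
  have := forest_restr (subsetDl _ _) fwd2 bwd2 Fp.
  by rewrite rootset_setD_component // nR'; apply.
have := forest_restr (component_sub S p r) (component_fwd pS rR) (component_bwd pS) Fp.
rewrite rootset_component // cards1 => ->.
by rewrite (rootset_restr _ (component_sub S p r)) rootset_component // set11.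
Qed.

Lemma forest_split_glue k q1 q2 :
  forest Q P (pred1 1) S1 q1 -> r \in rootset S1 q1 -> forest Q P (pred1 k) (S :\: S1) q2 ->
  [&& forest Q P (pred1 k.+1) S (glue S1 q1 q2), r \in rootset S (glue S1 q1 q2)
    & component S (glue S1 q1 q2) r == S1].
Proof.
move=> F1 rR F2; have /forestP [q1S ac1 /eqP n1 _] := F1.
have q2S := forest_parent_on F2.
have R1 : rootset S1 q1 = [set r].
  by apply/eqP; rewrite eq_sym eqEcard sub1set rR cards1 n1.
have := forest_glue disjoint_setD q1S q2S F1 F2; rewrite add1n setU_setD => ->.
rewrite -setU_setD rootset_glue ?disjoint_setD // R1 setU11.
by rewrite component_glue ?disjoint_setD ?eqxx.
Qed.

Lemma card_forests_split k :
  #|[set p | [&& forest Q P (pred1 k.+1) S p, r \in rootset S p & component S p r == S1]]| =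
  #|[set q | forest Q P (pred1 1) S1 q && (r \in rootset S1 q)]| *
  nforests Q P (pred1 k) (S :\: S1).
Proof.
rewrite /nforests -cardsX -(card_in_imset (f := fun qq => glue S1 qq.1 qq.2)).
  apply: eq_card => p; rewrite inE; apply/idP/imsetP => [|[[q1 q2]]].
    case/and3P=> Fp rR /eqP cS; have [/andP [F1 R1] F2] := forest_split_restr Fp rR cS.
    exists (restr S1 p, restr (S :\: S1) p).
      by rewrite !inE /= in R1 *; rewrite F1 R1 F2.
    by rewrite /= glue_restr // (forest_parent_on Fp).
  move=> qD ->; rewrite !inE /= in qD; case/andP: qD => /andP [F1 rR] F2.
  by apply: forest_split_glue F1 _ F2; rewrite inE.
move=> [q1 q2] [q1' q2']; rewrite !inE /=.
move=> /andP [/andP [/forest_parent_on q1S _] /forest_parent_on q2S].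
move=> /andP [/andP [/forest_parent_on q1S' _] /forest_parent_on q2S'] e.
congr (_, _).
  by rewrite -(restr_gluel q2 q1S) e restr_gluel.
by rewrite -(restr_gluer q1 disjoint_setD q2S) e restr_gluer // disjoint_setD.
Qed.

End Split.

Lemma nforests_rootsum Q P k S :
  k * nforests Q P (pred1 k) S =
  \sum_r #|[set p | forest Q P (pred1 k) S p && (r \in rootset S p)]|.
Proof.
rewrite sum_card_mem /nforests mulnC -sum_nat_const.
by apply: eq_big => p; rewrite inE // => /forestP [_ _ /eqP ->].
Qed.

Lemma nforests_split Q P k S :
  k.+1 * nforests Q P (pred1 k.+1) S =
  \sum_(S1 : {set U} | S1 \subset S)
    nforests Q P (pred1 1) S1 * nforests Q P (pred1 k) (S :\: S1).
Proof.
rewrite nforests_rootsum.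
under [RHS]eq_bigr => S1 _ do rewrite -[nforests _ _ _ S1]mul1n nforests_rootsum big_distrl.
rewrite [RHS]exchange_big /=; apply: eq_bigr => r _.
rewrite (card_partition_pred (f := fun p => component S p r) (K := fun S1 => S1 \subset S)).
  apply: eq_bigr => S1 S1S; rewrite -card_forests_split //.
  by apply: eq_card => p; rewrite !inE -andbA.
by move=> p _; apply: component_sub.
Qed.

End Components.

(** * Removing the root of a tree *)

Section CutRoot.
Variables (U : finType) (P : pred nat).
Implicit Types (p q : {ffun U -> option U}) (S : {set U}).

Definition cut p r : {ffun U -> option U} :=
  [ffun x => if p x == Some r then None else p x].
Definition graft S r q : {ffun U -> option U} :=
  [ffun x => if [&& x \in S, x != r & q x == None] then Some r else q x].

Section Cut.
Variables (S : {set U}) (r : U) (p : {ffun U -> option U}).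
Hypotheses (Tp : forest (predm1 P) P (pred1 1) S p) (rR : r \in rootset S p).

Let pS : parent_on S p := forest_parent_on Tp.

Lemma tree_rootset : rootset S p = [set r].
Proof.
case/forestP: Tp => _ _ /eqP nR _.
by apply/eqP; rewrite eq_sym eqEcard sub1set rR cards1 nR.
Qed.

Lemma tree_parent x : x \in S -> x != r -> p x != None.
Proof.
move=> xS xr; apply: contra xr => px.
by rewrite -in_set1 -tree_rootset inE xS px.
Qed.

Lemma parent_on_cut : parent_on (S :\ r) (cut p r).
Proof.
case/parent_onP: pS => out val; apply/parent_onP; split=> [x|x y]; rewrite ffunE.
  rewrite in_setD1 negb_and negbK; case: eqP => [->|_ /= xS]; last by rewrite out.
  by rewrite (rootset_None rR).
case: eqP => // pxr pxy; rewrite in_setD1 (val _ _ pxy) andbT.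
by apply/eqP => yr; apply: pxr; rewrite pxy yr.
Qed.

Lemma rootset_cut : rootset (S :\ r) (cut p r) = [set y | p y == Some r].
Proof.
case/parent_onP: pS => out val; apply/setP => x; rewrite !inE ffunE.
case: (eqVneq (p x) (Some r)) => [pxr|pxr] /=.
  rewrite andbT; apply/andP; split; last by apply: contraT => /out; rewrite pxr.
  by apply/eqP => xr; move: pxr; rewrite xr (rootset_None rR).
by case: (eqVneq x r) => //= xr; case: (boolP (x \in S)) => //= /tree_parent/(_ xr)/negbTE.
Qed.

Lemma nchild_cut x : x != r -> nchild (cut p r) x = nchild p x.
Proof.
move=> xr; apply: nchild_eq => y; rewrite ffunE.
case: (eqVneq (p y) (Some r)) => // ->.
by rewrite (inj_eq Some_inj) [r == x]eq_sym (negbTE xr).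
Qed.

Lemma forest_cut : forest P P (predm1 P) (S :\ r) (cut p r).
Proof.
case/forestP: Tp => _ ac _ deg; apply/forestP; split.
- exact: parent_on_cut.
- by apply: acyclic_sub ac => x; rewrite ffunE; case: ifP; [right | left].
- have := deg r (subsetP (rootset_sub S p) r rR).
  by rewrite rootset_cut (rootset_None rR).
move=> x; rewrite in_setD1 => /andP [xr xS]; rewrite nchild_cut //.
by have := deg x xS; rewrite (negbTE (tree_parent xS xr)) ffunE; case: ifP.
Qed.

Lemma graft_cut : graft S r (cut p r) = p.
Proof.
case/parent_onP: pS => out _; apply/ffunP => x; rewrite !ffunE.
case: (eqVneq (p x) (Some r)) => [pxr|pxr] /=.
  have xS : x \in S by apply: contraT => /out; rewrite pxr.
  by rewrite xS pxr andbT; case: eqP pxr => // ->; rewrite (rootset_None rR).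
case: (boolP (x \in S)) => //= xS; case: (eqVneq x r) => //= xr.
by rewrite (negbTE (tree_parent xS xr)).
Qed.

End Cut.

Section Graft.
Variables (S : {set U}) (r : U) (q : {ffun U -> option U}).
Hypotheses (rS : r \in S) (Fq : forest P P (predm1 P) (S :\ r) q).
Let g := graft S r q.

Let q_out x : x \notin S :\ r -> q x = None.
Proof. by case/parent_onP: (forest_parent_on Fq) => out _ /out. Qed.

Let q_val x y : q x = Some y -> y \in S :\ r.
Proof. by case/parent_onP: (forest_parent_on Fq) => _ /[apply]. Qed.

Lemma graft_root : g r = None.
Proof. by rewrite ffunE eqxx andbF /= q_out // !inE eqxx. Qed.

Lemma graftE x : g x = q x \/ q x = None /\ g x = Some r.
Proof. by rewrite ffunE; case: ifP => [/and3P [_ _ /eqP]|_]; [right | left]. Qed.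

Lemma parent_on_graft : parent_on S g.
Proof.
apply/parent_onP; split=> [x xS|x y]; rewrite ffunE.
  by rewrite (negbTE xS) q_out // !inE (negbTE xS) andbF.
by case: ifP => [_ [<-] //|_ /q_val /setD1P []].
Qed.

Lemma acyclic_graft : acyclic g.
Proof.
have /forestP [_ /acyclicP fin _ _] := Fq; apply/acyclicP => x.
have [k fk] := fin x; exists k.+1; elim: k x fk => [|k IHk] x //.
rewrite !iterSr; have -> : up q (Some x) = q x by [].
have -> : up g (Some x) = g x by []; case: (graftE x) => [->|[_ ->]].
  by case: (q x) => [y /IHk gy|_]; rewrite ?iter_up_None // -iterSr.
by have -> : up g (Some r) = g r by []; rewrite graft_root iter_up_None.
Qed.

Lemma rootset_graft : rootset S g = [set r].
Proof.
apply/setP => x; rewrite !inE ffunE; case: (eqVneq x r) => [->|xr] /=.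
  by rewrite rS q_out // !inE eqxx.
by case: (x \in S) => //=; case: (q x).
Qed.

Lemma nchild_graft_root : nchild g r = #|rootset (S :\ r) q|.
Proof.
apply: eq_card => y; rewrite !inE ffunE.
case: ifP => [/and3P [yS yr ->]|]; first by rewrite eqxx yr yS.
have -> : (q y == Some r) = false.
  by apply/negbTE/eqP => /q_val; rewrite !inE eqxx.
by case: (y \in S); case: (y != r); case: (q y == None).
Qed.

Lemma nchild_graft x : x != r -> nchild g x = nchild q x.
Proof.
move=> xr; apply: nchild_eq => y; rewrite ffunE; case: ifP => [/and3P [_ _ /eqP ->]|//].
by rewrite (inj_eq Some_inj) [r == x]eq_sym (negbTE xr).
Qed.

Lemma forest_graft : forest (predm1 P) P (pred1 1) S g.
Proof.
have /forestP [_ _ nR deg] := Fq; apply/forestP; split.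
- exact: parent_on_graft.
- exact: acyclic_graft.
- by rewrite rootset_graft cards1.
move=> x xS; case: (eqVneq x r) => [->|xr].
  by rewrite graft_root eqxx nchild_graft_root.
have xSr : x \in S :\ r by rewrite !inE xr.
rewrite nchild_graft //; have := deg x xSr; rewrite ffunE xS xr /=.
by case: (q x) => //=; case: ifP.
Qed.

Lemma cut_graft : cut g r = q.
Proof.
apply/ffunP => x; rewrite !ffunE.
case: (boolP [&& _, _ & _]) => [/and3P [_ _ /eqP ->]|_]; first by rewrite eqxx.
by case: eqP => // /q_val; rewrite !inE eqxx.
Qed.

End Graft.

Lemma card_trees_rooted_at S r : r \in S ->
  #|[set p | forest (predm1 P) P (pred1 1) S p && (r \in rootset S p)]| =
  nforests P P (predm1 P) (S :\ r).
Proof.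
move=> rS; rewrite /nforests -(card_in_imset (f := cut^~ r)).
  apply: eq_card => q; rewrite inE; apply/imsetP/idP => [[p]|Fq].
    by rewrite inE => /andP [Tp rR] ->; apply: forest_cut.
  exists (graft S r q); last by rewrite cut_graft.
  by rewrite inE forest_graft //= rootset_graft // set11.
move=> p1 p2; rewrite inE => /andP [T1 R1]; rewrite inE => /andP [T2 R2] e.
by rewrite -(graft_cut T1 R1) e graft_cut.
Qed.

Lemma nforests_tree S :
  nforests (predm1 P) P (pred1 1) S = \sum_(r in S) nforests P P (predm1 P) (S :\ r).
Proof.
rewrite -[LHS]mul1n nforests_rootsum [RHS]big_mkcond; apply: eq_bigr => r _.
case: ifP => [|/negbT rS]; first exact: card_trees_rooted_at.
apply/eqP; rewrite cards_eq0; apply/eqP/setP => p; rewrite !inE.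
by apply/negbTE; apply: contra rS => /andP [_ /andP []].
Qed.

End CutRoot.

(** * Endofunctions as forests with permuted roots *)

Section CyclicPoints.
Variables (n : nat) (f : 'I_n -> 'I_n).

Definition cyclic_pt x := [exists j : 'I_n, iter j.+1 f x == x].

Lemma cyclic_ptP x : reflect (exists j, iter j.+1 f x = x) (cyclic_pt x).
Proof.
apply: (iffP existsP) => [[j /eqP fj]|[j]]; first by exists j.
rewrite iterSr => /iter_lt_card [k]; rewrite card_ord => kn fk.
by exists (Ordinal kn); rewrite iterSr fk.
Qed.

Lemma cyclic_pt_f x : cyclic_pt x -> cyclic_pt (f x).
Proof.
by case/cyclic_ptP => j fj; apply/cyclic_ptP; exists j; rewrite -iterSr iterS fj.
Qed.

Lemma cyclic_pt_iter k x : cyclic_pt x -> cyclic_pt (iter k f x).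
Proof. by move=> cx; elim: k => //= k; apply: cyclic_pt_f. Qed.

Lemma cyclic_pt_inj x y : cyclic_pt x -> cyclic_pt y -> f x = f y -> x = y.
Proof.
case/cyclic_ptP => a fa /cyclic_ptP [b fb] fxy.
have period z c m : iter c.+1 f z = z -> iter (m * c.+1) f z = z.
  by move=> fz; rewrite iterM iter_fix.
rewrite -(period x a b.+1 fa) -(period y b a.+1 fb) mulnC.
by rewrite mulSn addSn !iterSr fxy.
Qed.

Lemma cyclic_pt_eventually x : cyclic_pt (iter n f x).
Proof.
pose g (i : 'I_n.+1) := iter i f x.
have /injectivePn [i [j ij gij]] : ~~ injectiveb g.
  by apply/injectiveP => /leq_card; rewrite !card_ord ltnn.
wlog lt_ij : i j ij gij / i < j.
  move=> W; case: (ltngtP i j) => [|ji|/val_inj eq_ij]; first exact: W.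
    by apply: (W j i); rewrite // eq_sym.
  by rewrite eq_ij eqxx in ij.
have cyc_i : cyclic_pt (iter i f x).
  apply/cyclic_ptP; exists (j - i).-1.
  by rewrite prednK ?subn_gt0 // -iterD subnK 1?ltnW.
have i_n : i <= n by rewrite -ltnS (ltn_trans lt_ij).
have -> : iter n f x = iter (n - i) f (iter i f x) by rewrite -iterD (subnK i_n).
exact: cyclic_pt_iter.
Qed.

End CyclicPoints.

Section FunctionsAsForests.
Variable n : nat.
Implicit Types (f : {ffun 'I_n -> 'I_n}) (q : {ffun 'I_n -> option 'I_n}).

Definition forest_of_fun f : {ffun 'I_n -> option 'I_n} :=
  [ffun x => if cyclic_pt f x then None else Some (f x)].

Definition fibre f x := #|[set y | f y == x]|.

Lemma rootset_forest_of_fun f :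
  rootset [set: 'I_n] (forest_of_fun f) = [set x | cyclic_pt f x].
Proof. by apply/setP => x; rewrite !inE ffunE; case: ifP. Qed.

Lemma acyclic_forest_of_fun f : acyclic (forest_of_fun f).
Proof.
have climb k x :
    cyclic_pt f (iter k f x) -> iter k.+1 (up (forest_of_fun f)) (Some x) = None.
  elim: k x => [|k IHk] x cx; rewrite iterSr /= ffunE; first by rewrite cx.
  by case: ifP => _; rewrite ?iter_up_None //; apply: IHk; rewrite -iterSr.
by apply/acyclicP => x; exists n.+1; apply: climb; apply: cyclic_pt_eventually.
Qed.

Lemma fibre_forest_of_fun f x :
  fibre f x = nchild (forest_of_fun f) x + cyclic_pt f x.
Proof.
rewrite /fibre -(cardsID [set y | cyclic_pt f y]) addnC; congr (_ + _).
  by apply: eq_card => y; rewrite !inE ffunE; case: (cyclic_pt f y).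
case: (boolP (cyclic_pt f x)) => cx /=; last first.
  apply/eqP; rewrite cards_eq0; apply/eqP/setP => y; rewrite !inE.
  by apply/negbTE; apply: contra cx => /andP [/eqP <-]; apply: cyclic_pt_f.
have [j fj] := cyclic_ptP _ _ cx; have cxj := cyclic_pt_iter j cx.
rewrite -(cards1 (iter j f x)); apply: eq_card => y; rewrite !inE.
apply/andP/eqP => [[/eqP fy cy]|->]; last by rewrite -iterS fj.
by apply: cyclic_pt_inj cy cxj _; rewrite -iterS fj.
Qed.

Lemma forest_forest_of_fun P f :
  fibresP P f -> forest (predm1 P) P predT [set: 'I_n] (forest_of_fun f).
Proof.
move=> /forallP fibP; apply/forestP; split=> //.
- by apply/parent_onP; split=> [x|x y _]; rewrite inE.
- exact: acyclic_forest_of_fun.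
move=> x _; have := fibP x; rewrite -/(fibre f x) fibre_forest_of_fun ffunE.
by case: (cyclic_pt f x); rewrite ?addn1 ?addn0.
Qed.

Definition fun_of_forest q (s : {perm 'I_n}) : {ffun 'I_n -> 'I_n} :=
  [ffun x => if q x is Some y then y else s x].

Section FunOfForest.
Variables (P : pred nat) (q : {ffun 'I_n -> option 'I_n}) (s : {perm 'I_n}).
Hypotheses (Fq : forest (predm1 P) P predT [set: 'I_n] q)
  (sR : perm_on (rootset [set: 'I_n] q) s).
Let R := rootset [set: 'I_n] q.
Let g := fun_of_forest q s.

Let in_rootsetT x : (x \in R) = (q x == None).
Proof. by rewrite !inE. Qed.

Lemma fun_of_forest_root x : x \in R -> g x = s x.
Proof. by rewrite in_rootsetT ffunE => /eqP ->. Qed.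

Lemma iter_fun_of_forest_root k x : x \in R -> iter k g x = iter k s x /\ iter k s x \in R.
Proof.
move=> xR; elim: k => [|k [IHg IHR]] //; rewrite !iterS IHg fun_of_forest_root //.
by rewrite (perm_closed _ sR).
Qed.

Lemma fun_of_forest_reaches_root x : exists k, iter k g x \in R.
Proof.
have track k : iter k g x \in R \/ Some (iter k g x) = iter k (up q) (Some x).
  elim: k => [|k IHk]; first by right.
  rewrite !iterS; case: (boolP (iter k g x \in R)) => kR.
    by left; rewrite fun_of_forest_root // (perm_closed _ sR).
  case: IHk => [kR'|<-]; first by rewrite kR' in kR.
  by right; rewrite /= ffunE; move: kR; rewrite in_rootsetT; case: (q _).
have /forestP [_ /acyclicP /(_ x) [k fk] _ _] := Fq.
by exists k; case: (track k) => //; rewrite fk.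
Qed.

Lemma cyclic_pt_fun_of_forest x : cyclic_pt g x = (x \in R).
Proof.
apply/idP/idP => [/cyclic_ptP [j fj]|xR].
  have [k kR] := fun_of_forest_reaches_root x.
  have fkj : iter (k * j.+1) g x = x by rewrite iterM iter_fix.
  rewrite -fkj -(subnK (leq_pmulr k (ltn0Sn j))) iterD.
  by case: (iter_fun_of_forest_root (k * j.+1 - k) kR) => ->.
apply/cyclic_ptP; exists #|porbit s x|.-1.
rewrite prednK ?card_gt0; last by apply/set0Pn; exists x; apply: porbit_id.
by case: (iter_fun_of_forest_root #|porbit s x| xR) => ->; rewrite iter_porbit.
Qed.

Lemma forest_of_fun_of_forest : forest_of_fun g = q.
Proof.
by apply/ffunP => x; rewrite !ffunE cyclic_pt_fun_of_forest in_rootsetT; case: (q x).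
Qed.

Lemma fibresP_fun_of_forest : fibresP P g.
Proof.
apply/forallP => x; rewrite -/(fibre g x) fibre_forest_of_fun.
rewrite forest_of_fun_of_forest cyclic_pt_fun_of_forest.
have /forestP [_ _ _ /(_ x (in_setT x))] := Fq; rewrite -in_rootsetT.
by case: (x \in R); rewrite /= ?addn1 ?addn0.
Qed.

End FunOfForest.

Lemma fun_of_forest_inj q :
  {in perm_on (rootset [set: 'I_n] q) &, injective (fun_of_forest q)}.
Proof.
move=> s1 s2 s1R s2R /ffunP e; apply/permP => x.
case: (boolP (x \in rootset [set: 'I_n] q)) => xR.
  by move: (e x) xR; rewrite !ffunE !inE => + /eqP qx; rewrite qx.
by rewrite (out_perm s1R xR) (out_perm s2R xR).
Qed.

Lemma fun_of_forestP f : exists2 s : {perm 'I_n},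
  perm_on (rootset [set: 'I_n] (forest_of_fun f)) s & fun_of_forest (forest_of_fun f) s = f.
Proof.
pose h x := if cyclic_pt f x then f x else x.
have h_inj : injective h.
  move=> x y; rewrite /h.
  case: (boolP (cyclic_pt f x)) => cx; case: (boolP (cyclic_pt f y)) => cy //.
  - exact: cyclic_pt_inj.
  - by move=> fxy; move: cy; rewrite -fxy cyclic_pt_f.
  - by move=> fxy; move: cx; rewrite fxy cyclic_pt_f.
exists (perm h_inj).
  apply/subsetP => x; rewrite inE permE /h rootset_forest_of_fun inE.
  by case: (cyclic_pt f x); rewrite ?eqxx.
by apply/ffunP => x; rewrite !ffunE permE /h; case: (cyclic_pt f x).
Qed.

Lemma sum_forests_by_roots (V : nmodType) Q P (c : nat -> V) :
  (\sum_(q | forest Q P predT [set: 'I_n] q) c #|rootset [set: 'I_n] q| =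
   \sum_(k < n.+1) c k *+ forest_count Q P (pred1 (k : nat)) n)%R.
Proof.
rewrite (partition_big (fun q => Ordinal (rootset_ltn q)) xpredT) //=.
apply: eq_bigr => k _; rewrite -sumr_const /forest_count /nforests.
rewrite (eq_bigr (fun=> c k)) => [|q /andP [_ /eqP <-] //].
by apply: eq_bigl => q; rewrite inE [in RHS]forestT -val_eqE.
Qed.

Lemma sum_cyc (V : nmodType) P (c : nat -> V) :
  (\sum_(f : {ffun 'I_n -> 'I_n} | fibresP P f) c (cyc f) =
   \sum_(k < n.+1) c k *+ (k`! * forest_count (predm1 P) P (pred1 (k : nat)) n))%R.
Proof.
under [RHS]eq_bigr => k _ do rewrite mulrnA.
rewrite -(sum_forests_by_roots _ _ (fun k => c k *+ k`!)%R).
rewrite (partition_big forest_of_fun (fun q => forest (predm1 P) P predT [set: 'I_n] q)) /=;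
  last by move=> f; apply: forest_forest_of_fun.
apply: eq_bigr => q Fq; rewrite (eq_bigr (fun=> c #|rootset [set: 'I_n] q|)); last first.
  by move=> f /andP [_ /eqP <-]; rewrite rootset_forest_of_fun.
rewrite -(card_perm (rootset [set: 'I_n] q)) -(card_in_imset (@fun_of_forest_inj q)).
rewrite -sumr_const.
apply: eq_bigl => f; apply/andP/imsetP => [[_ /eqP <-]|[s sR ->]].
  by have [s sR fs] := fun_of_forestP f; exists s; rewrite ?fs.
by split; [apply: fibresP_fun_of_forest Fq sR | rewrite (forest_of_fun_of_forest Fq sR)].
Qed.

End FunctionsAsForests.

(** * Counting forests on an ordinal *)

Lemma sum_set_by_card n (F : nat -> nat) :
  \sum_(A : {set 'I_n}) F #|A| = \sum_(i < n.+1) 'C(n, i) * F i.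
Proof.
have ltn_card (A : {set 'I_n}) : #|A| < n.+1.
  by rewrite ltnS -[X in _ <= X](card_ord n) max_card.
rewrite (partition_big (fun A => Ordinal (ltn_card A)) xpredT) //=; apply: eq_bigr => i _.
rewrite (eq_bigr (fun=> F i)) => [|A /eqP <- //].
rewrite sum_nat_const -[n in 'C(n, _)]card_ord -card_draws; congr (_ * _).
by apply: eq_card => A; rewrite !inE.
Qed.

Section ForestCounts.
Variables Q P : pred nat.

Lemma nforests_set0 (U : finType) K : nforests Q P K (set0 : {set U}) = K 0.
Proof.
have none_only (p : {ffun U -> option U}) : parent_on set0 p = (p == [ffun=> None]).
  apply/parent_onP/eqP => [[out _]|->]; first by apply/ffunP => x; rewrite ffunE out ?inE.
  by split=> [x|x y]; rewrite ffunE.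
have rootset0 (p : {ffun U -> option U}) : rootset set0 p = set0.
  by apply/setP => x; rewrite !inE.
have forest0 (p : {ffun U -> option U}) : forest Q P K set0 p = (p == [ffun=> None]) && K 0.
  rewrite /forest none_only rootset0 cards0; case: eqP => //= p0.
  have -> : acyclic p by apply/acyclicP => x; exists 1; rewrite /= p0 ffunE.
  by case: (K 0) => //=; apply/forall_inP => x; rewrite inE.
rewrite /nforests; case: (boolP (K 0)) => [K0|/negbTE K0] /=.
  rewrite -(cards1 ([ffun=> None] : {ffun U -> option U})).
  by apply: eq_card => p; rewrite !inE forest0 K0 andbT.
by apply/eqP; rewrite cards_eq0; apply/eqP/setP => p; rewrite !inE forest0 K0 andbF.
Qed.

Lemma forest_count_split k n :
  k.+1 * forest_count Q P (pred1 k.+1) n =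
  \sum_(i < n.+1)
    'C(n, i) * (forest_count Q P (pred1 1) i * forest_count Q P (pred1 k) (n - i)).
Proof.
rewrite /forest_count nforests_split -(sum_set_by_card n (fun i =>
  forest_count Q P (pred1 1) i * forest_count Q P (pred1 k) (n - i))).
rewrite (eq_bigl xpredT) => [|A]; last by rewrite subsetT.
apply: eq_bigr => A _; rewrite !nforests_card; congr (_ * forest_count _ _ _ _).
by rewrite cardsD setTI cardsT card_ord.
Qed.

Lemma forest_count_empty K : forest_count Q P K 0 = K 0.
Proof.
by rewrite /forest_count (_ : [set: 'I_0] = set0) ?nforests_set0 //; apply/setP => -[].
Qed.

Lemma forest_count_no_root n : forest_count Q P (pred1 0) n = (n == 0).
Proof.
case: n => [|n]; first by rewrite forest_count_empty.
apply/eqP; rewrite cards_eq0; apply/eqP/setP => p; rewrite !inE.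
apply/negbTE/forestP => -[pS ac /eqP /cards0_eq R0 _].
by have [r] := reach_rootset pS ac (in_setT ord0); rewrite R0 inE.
Qed.

Lemma forest_count_pred K n :
  forest_count Q P K n = \sum_(j < n.+1 | K j) forest_count Q P (pred1 (j : nat)) n.
Proof.
rewrite /forest_count /nforests (card_partition_pred (f := fun p => Ordinal (rootset_ltn p))
  (K := fun j : 'I_n.+1 => K j)); last by move=> p /forestP [].
apply: eq_bigr => j Kj; apply: eq_card => p; rewrite !inE forestT [RHS]forestT -val_eqE /=.
by case: eqP => [->|]; rewrite ?Kj ?andbT ?andbF.
Qed.

End ForestCounts.

Lemma forest_count_tree P n :
  forest_count (predm1 P) P (pred1 1) n.+1 = n.+1 * forest_count P P (predm1 P) n.
Proof.
rewrite /forest_count nforests_tree (eq_bigr (fun=> forest_count P P (predm1 P) n)).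
  by rewrite sum_nat_const cardsT card_ord.
by move=> r _; rewrite nforests_card setTD cardsC1 card_ord.
Qed.

Lemma tree_count_forest_count P n : tree_count P n = forest_count P P (pred1 1) n.
Proof.
apply: eq_card => p; rewrite !inE /forest /is_rooted_tree /acyclic card_ord.
have -> : parent_on [set: 'I_n] p by apply/parent_onP; split=> [x|x y _]; rewrite inE.
have -> : rootset [set: 'I_n] p = [set x | p x == None] by apply/setP => x; rewrite !inE.
have -> : [forall x in [set: 'I_n], if p x == None then P (nchild p x)
                                      else P (nchild p x)] =
          [forall x, P (nchildren p x)].
  apply/forall_inP/forallP => deg x; last by rewrite deg; case: ifP.
  by move: (deg x (in_setT x)); case: ifP.
by rewrite /= andbCA andbA.
Qed.

(** * Exponential generating functions *)

Local Open Scope ring_scope.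

Section PowerSeries.
Variables (S : comNzRingType) (a : nat -> S).

Lemma fps_powS k : fps_pow a k.+1 = fps_mul a (fps_pow a k).
Proof. by []. Qed.

Lemma fps_pow0 m : fps_pow a 0 m = (m == 0)%:R.
Proof. by rewrite /fps_pow /= /fps_one; case: (m == 0). Qed.

(* Stated with the factorials cleared, so that no division is needed. *)
Lemma fact_mul_fps_pow (h : nat -> nat -> nat) :
  (forall m, h 0 m = (m == 0)) ->
  (forall k m, k.+1 * h k.+1 m = \sum_(i < m.+1) 'C(m, i) * (h 1 i * h k (m - i)))%N ->
  (forall m, m`!%:R * a m = (h 1 m)%:R) ->
  forall k m, m`!%:R * fps_pow a k m = (k`! * h k m)%:R.
Proof.
move=> h0 hS ha; elim=> [|k IHk] m.
  by rewrite fps_pow0 h0 fact0 mul1n; case: m => [|m]; rewrite ?fact0 ?mul1r ?mulr0.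
rewrite fps_powS /fps_mul mulr_sumr factS mulnAC hS big_distrl natr_sum /=.
apply: eq_bigr => i _; have le_im : (i <= m)%N by rewrite -ltnS.
have -> : (('C(m, i) * (h 1 i * h k (m - i))) * k`!)%N%:R =
          'C(m, i)%:R * (h 1 i)%:R * (k`! * h k (m - i))%N%:R :> S.
  by rewrite !natrM; ring.
by rewrite -ha -IHk -(bin_fact le_im) !natrM; ring.
Qed.

Hypothesis a0 : a 0 = 0.

Lemma fps_pow_small k m : (m < k)%N -> fps_pow a k m = 0.
Proof.
elim: k m => // k IHk m lt_mk; rewrite fps_powS /fps_mul big_ord_recl a0 mul0r add0r.
by rewrite big1 // => i _; rewrite IHk ?mulr0 // lift0; move: (ltn_ord i) lt_mk; lia.
Qed.

Lemma fps_powS_succ k m :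
  fps_pow a k.+1 m.+1 = \sum_(i < m.+1) a (m.+1 - i) * fps_pow a k i.
Proof.
rewrite fps_powS /fps_mul big_ord_recl a0 mul0r add0r.
rewrite (reindex_inj rev_ord_inj) /=; apply: eq_bigr => i _.
have lt_im := ltn_ord i; rewrite /bump leq0n add1n.
by congr (a _ * fps_pow a k _); lia.
Qed.

Definition geometric (u : S) n := \sum_(k < n.+1) u ^+ k * fps_pow a k n.

Lemma geometric_widen (u : S) N n : (n <= N)%N ->
  \sum_(k < N.+1) u ^+ k * fps_pow a k n = geometric u n.
Proof.
move=> le_nN; rewrite /geometric.
rewrite (big_ord_widen N.+1 (fun k => u ^+ k * fps_pow a k n) (le_nN : (n < N.+1)%N)).
rewrite [RHS]big_mkcond; apply: eq_bigr => k _.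
by case: ltnP => // lt_nk; rewrite fps_pow_small ?mulr0.
Qed.

Lemma geometric_succ u m :
  geometric u m.+1 = \sum_(i < m.+1) geometric u i * (u * a (m.+1 - i)).
Proof.
rewrite {1}/geometric big_ord_recl fps_pow0 mulr0 add0r.
under eq_bigr => k _ do rewrite lift0 fps_powS_succ mulr_sumr.
rewrite exchange_big /=; apply: eq_bigr => i _.
rewrite -(geometric_widen u (ltnSE (ltn_ord i))) mulr_suml; apply: eq_bigr => k _.
by rewrite exprS; ring.
Qed.

Lemma fps_geometric u :
  fps_mul (geometric u) (fun n => if n is k.+1 then - (u * a k.+1) else 1) = @fps_one S.
Proof.
apply: functional_extensionality => -[|m].
  by rewrite /fps_mul big_ord1 /geometric big_ord1 fps_pow0 !mulr1.
rewrite /fps_mul big_ord_recr subnn mulr1 /= geometric_succ /fps_one /=.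
rewrite -[RHS](addNr (\sum_(i < m.+1) geometric u i * (u * a (m.+1 - i)))) -sumrN.
by congr (_ + _); apply: eq_bigr => i _; rewrite subSn ?mulrN // -ltnS.
Qed.

End PowerSeries.

Definition zeT (R : comUnitRingType) (P : pred nat) : nat -> R :=
  fun m => if m is k.+1 then fps_comp (expP R (predm1 P)) (TP R P) k else 0.

Section Main.
Variable R : comUnitRingType.
Hypothesis hQ : forall n : nat, (n.+1)%:R \is a @GRing.unit R.
Variable P : pred nat.

Lemma fact_unit m : (m`!%:R : R) \is a GRing.unit.
Proof. by elim: m => [|m IHm]; rewrite ?unitr1 // factS natrM unitrM hQ. Qed.

Lemma fact_mul_TP m : m`!%:R * TP R P m = (forest_count P P (pred1 1) m)%:R.
Proof. by rewrite /TP tree_count_forest_count mulrCA mulrV ?mulr1 ?fact_unit. Qed.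

Lemma fact_mul_fps_pow_TP k m :
  m`!%:R * fps_pow (TP R P) k m = (k`! * forest_count P P (pred1 k) m)%:R.
Proof.
apply: (fact_mul_fps_pow (h := fun k => forest_count P P (pred1 k))) => {k m}.
- exact: forest_count_no_root.
- exact: forest_count_split.
exact: fact_mul_TP.
Qed.

Lemma fact_mul_expP_comp_TP m :
  m`!%:R * fps_comp (expP R (predm1 P)) (TP R P) m = (forest_count P P (predm1 P) m)%:R.
Proof.
rewrite /fps_comp mulr_sumr forest_count_pred natr_sum [RHS]big_mkcond.
apply: eq_bigr => j _; rewrite /expP; case: ifP => _; last by rewrite mul0r mulr0.
by rewrite mulrCA fact_mul_fps_pow_TP natrM mulrA mulVr ?mul1r ?fact_unit.
Qed.

Lemma fact_mul_zeT m : m`!%:R * zeT R P m = (forest_count (predm1 P) P (pred1 1) m)%:R.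
Proof.
case: m => [|m]; first by rewrite mulr0 forest_count_empty.
by rewrite forest_count_tree factS natrM -mulrA fact_mul_expP_comp_TP -natrM.
Qed.

Lemma fact_mul_fps_pow_zeT k m :
  m`!%:R * fps_pow (fun m => (zeT R P m)%:P) k m =
  (k`! * forest_count (predm1 P) P (pred1 k) m)%:R :> {poly R}.
Proof.
apply: (fact_mul_fps_pow (h := fun k => forest_count (predm1 P) P (pred1 k))) => {k m}.
- exact: forest_count_no_root.
- exact: forest_count_split.
by move=> m; rewrite -polyC_natr -polyCM fact_mul_zeT polyC_natr.
Qed.

Lemma FCYCE n :
  FCYC R P n = \sum_(k < n.+1) 'X^k * fps_pow (fun m => (zeT R P m)%:P) k n.
Proof.
rewrite /FCYC sum_cyc scaler_sumr; apply: eq_bigr => k _.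
rewrite -['X^k *+ _]mulr_natr -fact_mul_fps_pow_zeT mulr_natl -scaler_nat scalerAr scalerA.
by rewrite mulVr ?scale1r ?fact_unit.
Qed.

End Main.

Theorem lemma5p9 (R : comUnitRingType)
    (hQ : forall n : nat, (n.+1)%:R \is a @GRing.unit R)
    (P : pred nat) :
  fps_mul (FCYC R P) (denomCYC R P) = @fps_one {poly R}.
Proof.
have -> : FCYC R P = geometric (fun m => (zeT R P m)%:P) 'X.
  by apply: functional_extensionality => n; rewrite (FCYCE hQ).
exact: fps_geometric.
Qed.
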